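(* Let $B_n=\{z\in\mathbb C^n:\|z\|^2<1\}$ be the unit ball. If $F$ is a strongly pseudoconvex complex Finsler metric on $B_n$ that is $\mathrm{Aut}(B_n)$-invariant, then there is a constant $c>0$ such that $$F^2(z,v)=c\,\frac{(1-\|z\|^2)\|v\|^2+|\langle z,v\rangle|^2}{(1-\|z\|^2)^2}\quad\text{for all }z\in B_n,\ v\in T^{1,0}_zB_n\cong\mathbb C^n,$$ i.e. $F$ is a constant multiple of the Poincaré–Bergman metric.
   Context: $\mathrm{Aut}(B_n)$ is the group of holomorphic automorphisms of $B_n$; $F$ is $\mathrm{Aut}(B_n)$-invariant if $F(f(z),f_\ast v)=F(z,v)$ for all $f\in\mathrm{Aut}(B_n)$ and $(z,v)\in T^{1,0}B_n$. A strongly pseudoconvex complex Finsler metric on a complex manifold $M$ is a continuous $F:T^{1,0}M\to[0,\infty)$ with $F(z,v)=0$ iff $v=0$, $G=F^2$ smooth off the zero section, $G(z,\lambda v)=|\lambda|^2G(z,v)$ for all $\lambda\in\mathbb C$, and $(\partial^2G/\partial v^\alpha\partial\bar v^\beta)$ positive definite off the zero section. $\langle z,v\rangle=\sum_i z^i\overline{v^i}$. *)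

(* Complex numbers are R[i] (real-closed
   library) over an abstract R : realType; C^n is 'rV[R[i]]_n viewed as a
   normed module over R[i] (so `differentiable`/'d are COMPLEX Frechet
   derivatives, i.e. holomorphy). *)
From mathcomp Require Import all_boot all_order all_algebra.
From mathcomp Require Import all_classical all_reals all_analysis.
From mathcomp Require Import complex.
Set Implicit Arguments. Unset Strict Implicit. Unset Printing Implicit Defensive.
Import Order.TTheory GRing.Theory Num.Theory.
Import numFieldNormedType.Exports.
Local Open Scope ring_scope.
Local Open Scope classical_set_scope.

Section BallFinsler.
Variables (R : realType) (n : nat).
Local Notation C := (R[i]).

Definition CV : normedModType (C : numFieldType) := 'rV[C]_n.
(* points (z, v) of the holomorphic tangent bundle T^{1,0} C^n = C^n x C^n *)
Definition TP := (CV * CV)%type.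

Definition cabs2 (x : C) : R := (complex.Re x) ^+ 2 + (complex.Im x) ^+ 2.
Definition herm (z v : CV) : C := \sum_(i < n) z 0 i * ((v 0 i)^*)%C.
Definition sqnorm (z : CV) : R := \sum_(i < n) cabs2 (z 0 i).
Definition unit_ball : set CV := [set z | sqnorm z < 1].

Definition holomorphic_on (U : set CV) (f : CV -> CV) : Prop :=
  forall z, U z -> differentiable f z.

Definition is_aut_ball (f : CV -> CV) : Prop :=
  holomorphic_on unit_ball f /\ (forall z, unit_ball z -> unit_ball (f z)) /\
  exists g : CV -> CV, holomorphic_on unit_ball g /\
    (forall z, unit_ball z -> unit_ball (g z)) /\
    (forall z, unit_ball z -> g (f z) = z) /\
    (forall z, unit_ball z -> f (g z) = z).

Definition aut_invariant (F : CV -> CV -> R) : Prop :=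
  forall f, is_aut_ball f -> forall z v, unit_ball z ->
    F (f z) ('d f z v) = F z v.

(* real smoothness on TP (real dimension 4n): all iterated real directional
   derivatives exist and are continuous *)
Definition shift (p w : TP) (t : R) : TP :=
  (p.1 + (t%:C)%C *: w.1, p.2 + (t%:C)%C *: w.2).
Definition ddir (g : TP -> R) (w : TP) : TP -> R :=
  fun p => 'D_1 (fun t : R => g (shift p w t)) 0.
Fixpoint Ck (k : nat) (U : set TP) (g : TP -> R) : Prop :=
  (forall p, U p -> {for p, continuous g}) /\
  match k with
  | 0 => True
  | k'.+1 => forall w : TP,
      (forall p, U p -> derivable (fun t : R => g (shift p w t)) 0 1) /\
      Ck k' U (ddir g w)
  end.
Definition smooth_on (U : set TP) (g : TP -> R) : Prop := forall k, Ck k U g.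

(* Wirtinger second derivatives d^2 G / d v^a d conj(v^b), with
   d/dv = (d/dx - i d/dy)/2 and d/dconj(v) = (d/dx + i d/dy)/2 *)
Definition ev (a : 'I_n) : CV := delta_mx 0 a.
Definition dxv (a : 'I_n) : TP := (0, ev a).
Definition dyv (a : 'I_n) : TP := (0, 'i%C *: ev a).
Definition levi (G : TP -> R) (p : TP) : 'M[C]_n :=
  \matrix_(a, b)
    (((4%:R)^-1)%:C *
      ((ddir (ddir G (dxv b)) (dxv a) p + ddir (ddir G (dyv b)) (dyv a) p)%:C
       + 'i * (ddir (ddir G (dyv b)) (dxv a) p
               - ddir (ddir G (dxv b)) (dyv a) p)%:C))%C.

Definition Gsq (F : CV -> CV -> R) : TP -> R := fun p => F p.1 p.2 ^+ 2.

Definition strongly_pseudoconvex_finsler (F : CV -> CV -> R) : Prop :=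
  (forall z v, unit_ball z -> 0 <= F z v) /\
  (forall p : TP, unit_ball p.1 -> {for p, continuous (fun q : TP => F q.1 q.2)}) /\
  (forall z v, unit_ball z -> (F z v = 0 <-> v = 0)) /\
  smooth_on [set p : TP | unit_ball p.1 /\ p.2 != 0] (Gsq F) /\
  (forall z v (l : C), unit_ball z -> Gsq F (z, l *: v) = cabs2 l * Gsq F (z, v)) /\
  (forall p : TP, unit_ball p.1 -> p.2 != 0 ->
     forall xi : CV, xi != 0 ->
       0 < \sum_(a < n) \sum_(b < n) levi (Gsq F) p a b * xi 0 a * ((xi 0 b)^*)%C).

End BallFinsler.

From mathcomp Require Import all_boot all_order all_algebra.
From mathcomp Require Import all_classical all_reals all_analysis.
From mathcomp Require Import complex.
From mathcomp Require Import ring lra.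
From HB Require Import structures.
Import Order.TTheory GRing.Theory Num.Theory.
Import numFieldNormedType.Exports.
Local Open Scope complex_scope.
Local Open Scope ring_scope.
Set Implicit Arguments. Unset Strict Implicit. Unset Printing Implicit Defensive.

(* Unitary maps fix the origin and act transitively on each sphere (already
   Householder reflections move any vector onto the first axis), so by
   homogeneity F(0, v)^2 = c |v|^2 with c = F(0, e1)^2 > 0.  The automorphism
   [mobius b] sends b e1 to 0 with differential
   v |-> (1 - |b|^2)^-1 (s v + (1 - s) v_1 e1), s = sqrt (1 - |b|^2), whose
   squared norm is ((1 - |b|^2) |v|^2 + |b|^2 |v_1|^2) / (1 - |b|^2)^2; this
   computes F on the first axis, and a reflection moving z onto the axis gives
   the formula everywhere. *)

Section ComplexModulus.
Variable R : realType.
Implicit Types (x y : R[i]) (r s : R).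

(* [rmorphM] and its relatives return the conjugation and the embedding
   [R -> R[i]] as canonical-structure projections, which later rewrites and
   [ring] do not identify with [Num.conj] and [_%:C]; these restatements keep
   the syntactic forms. *)
Lemma conjCB x y : (x - y)^* = x^* - y^*. Proof. exact: rmorphB. Qed.
Lemma conjCM x y : (x * y)^* = x^* * y^*. Proof. exact: rmorphM. Qed.
Lemma conjCN x : (- x)^* = - x^*. Proof. exact: rmorphN. Qed.
Lemma conjC_realc r : r%:C^* = r%:C. Proof. exact: conjc_real. Qed.

Lemma realc1 : 1%:C = 1 :> R[i]. Proof. exact: rmorph1. Qed.
Lemma realcB r s : (r - s)%:C = r%:C - s%:C. Proof. exact: rmorphB. Qed.
Lemma realcM r s : (r * s)%:C = r%:C * s%:C. Proof. exact: rmorphM. Qed.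
Lemma realcV r : r^-1%:C = r%:C^-1. Proof. exact: fmorphV. Qed.

Lemma cabs2E x : x * x^* = (cabs2 x)%:C.
Proof. by rewrite /cabs2 add_Re2_Im2 normCK. Qed.

Lemma cabs2_real r : cabs2 r%:C = r ^+ 2.
Proof. by rewrite /cabs2 /= expr0n addr0. Qed.

Lemma cabs2_ge0 x : 0 <= cabs2 x.
Proof. by rewrite addr_ge0 // sqr_ge0. Qed.

Lemma cabs2_eq0 x : (cabs2 x == 0) = (x == 0).
Proof.
by rewrite -(inj_eq (@complexI R)) -cabs2E mulf_eq0 conjc_eq0 orbb.
Qed.

Lemma cabs2_gt0 x : x != 0 -> 0 < cabs2 x.
Proof. by move=> x0; rewrite lt_def cabs2_eq0 x0 cabs2_ge0. Qed.

Lemma cabs2M x y : cabs2 (x * y) = cabs2 x * cabs2 y.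
Proof. by case: x => a b; case: y => c d; rewrite /cabs2 /=; ring. Qed.

Lemma cabs2J x : cabs2 x^* = cabs2 x.
Proof. by case: x => a b; rewrite /cabs2 /= sqrrN. Qed.

Lemma cabs2N x : cabs2 (- x) = cabs2 x.
Proof. by case: x => a b; rewrite /cabs2 /= !sqrrN. Qed.

Lemma exists_aligned_scalar (a : R[i]) r : 0 <= r ->
  exists b : R[i], cabs2 b = r /\ b * a^* = b^* * a.
Proof.
move=> r0; have [->|a0] := eqVneq a 0.
  by exists (Num.sqrt r)%:C; rewrite cabs2_real sqr_sqrtr // conjC0 !mulr0.
set k := Num.sqrt r / Num.sqrt (cabs2 a).
exists (k%:C * a); split.
  rewrite cabs2M cabs2_real expr_div_n !sqr_sqrtr ?cabs2_ge0 // divfK //.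
  by rewrite cabs2_eq0.
by rewrite conjCM conjC_realc; ring.
Qed.

End ComplexModulus.

Section HermitianProduct.
Variables (R : realType) (n : nat).
Implicit Types (x y z : CV R n) (k : R[i]).

Lemma hermDl x y z : herm (x + y) z = herm x z + herm y z.
Proof. by rewrite /herm -big_split; apply: eq_bigr => i _; rewrite mxE mulrDl. Qed.

Lemma hermDr x y z : herm z (x + y) = herm z x + herm z y.
Proof.
by rewrite /herm -big_split; apply: eq_bigr => i _; rewrite mxE rmorphD mulrDr.
Qed.

Lemma hermZl k x z : herm (k *: x) z = k * herm x z.
Proof. by rewrite /herm mulr_sumr; apply: eq_bigr => i _; rewrite mxE mulrA. Qed.

Lemma hermZr k x z : herm z (k *: x) = k^* * herm z x.
Proof.
by rewrite /herm mulr_sumr; apply: eq_bigr => i _; rewrite mxE rmorphM mulrCA.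
Qed.

Lemma hermNl x z : herm (- x) z = - herm x z.
Proof. by rewrite -scaleN1r hermZl mulN1r. Qed.

Lemma hermNr x z : herm z (- x) = - herm z x.
Proof. by rewrite -scaleN1r hermZr conjCN conjC1 mulN1r. Qed.

Lemma hermBl x y z : herm (x - y) z = herm x z - herm y z.
Proof. by rewrite hermDl hermNl. Qed.

Lemma hermBr x y z : herm z (x - y) = herm z x - herm z y.
Proof. by rewrite hermDr hermNr. Qed.

Lemma herm0l z : herm 0 z = 0.
Proof. by rewrite -(scale0r 0) hermZl mul0r. Qed.

Lemma herm0r z : herm z 0 = 0.
Proof. by rewrite -(scale0r 0) hermZr rmorph0 mul0r. Qed.

Lemma hermC x y : herm y x = (herm x y)^*.
Proof.
by rewrite /herm rmorph_sum; apply: eq_bigr => i _; rewrite rmorphM /= conjCK mulrC.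
Qed.

Lemma hermxx x : herm x x = (sqnorm x)%:C.
Proof.
by rewrite /herm /sqnorm rmorph_sum; apply: eq_bigr => i _; rewrite cabs2E.
Qed.

Lemma sqnorm_ge0 x : 0 <= sqnorm x.
Proof. by apply: sumr_ge0 => i _; apply: cabs2_ge0. Qed.

Lemma sqnorm0 : sqnorm (0 : CV R n) = 0.
Proof. by apply: complexI; rewrite -hermxx herm0l. Qed.

Lemma unit_ball0 : unit_ball (0 : CV R n).
Proof. by rewrite /unit_ball /= sqnorm0 ltr01. Qed.

Lemma sqnorm_eq0 x : (sqnorm x == 0) = (x == 0).
Proof.
rewrite psumr_eq0; last by move=> i _; apply: cabs2_ge0.
apply/allP/eqP => [x0|-> i _]; last by rewrite cabs2_eq0 mxE eqxx.
apply/rowP => i; rewrite mxE; apply/eqP; rewrite -cabs2_eq0.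
exact: x0 (mem_index_enum i).
Qed.

Lemma sqnormZ k x : sqnorm (k *: x) = cabs2 k * sqnorm x.
Proof.
by apply: complexI; rewrite realcM -!hermxx hermZl hermZr mulrA cabs2E.
Qed.

Lemma continuous_herml y : continuous (fun x : CV R n => herm x y : R[i]^o).
Proof.
apply: (continuous_big add_continuous) => i _ x.
apply: (@continuousM R[i] (CV R n) (fun z : CV R n => z 0 i) (fun=> (y 0 i)^*)).
  exact: coord_continuous.
exact: cst_continuous.
Qed.

End HermitianProduct.

Section FirstAxis.
Variables (R : realType) (n : nat).
Local Notation e1 := (ev R (ord0 : 'I_n.+1)).
Implicit Types (z : CV R n.+1) (b : R[i]).

Lemma e1E i : e1 0 i = (i == ord0)%:R.
Proof. by rewrite mxE eqxx. Qed.

Lemma herm_e1r z : herm z e1 = z 0 0.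
Proof.
rewrite /herm (bigD1 ord0) //= big1 ?addr0; first by rewrite e1E eqxx conjc1 mulr1.
by move=> i /negbTE i0; rewrite e1E i0 conjc0 mulr0.
Qed.

Lemma herm_e1l z : herm e1 z = (z 0 0)^*.
Proof. by rewrite hermC herm_e1r. Qed.

Lemma herm_e1e1 : herm e1 e1 = 1.
Proof. by rewrite herm_e1r e1E. Qed.

Lemma sqnorm_e1 : sqnorm e1 = 1.
Proof. by apply: complexI; rewrite -hermxx herm_e1e1. Qed.

Lemma e1_neq0 : e1 != 0.
Proof. by rewrite -sqnorm_eq0 sqnorm_e1 oner_eq0. Qed.

Lemma sqnormZe1 b : sqnorm (b *: e1) = cabs2 b.
Proof. by rewrite sqnormZ sqnorm_e1 mulr1. Qed.

Lemma coord0Ze1 b : (b *: e1) 0 0 = b.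
Proof. by rewrite mxE e1E mulr1. Qed.

Lemma cabs2_coord0_le_sqnorm z : cabs2 (z 0 0) <= sqnorm z.
Proof.
by rewrite /sqnorm (bigD1 ord0) //= lerDl; apply: sumr_ge0 => i _; apply: cabs2_ge0.
Qed.

End FirstAxis.

Section Differentials.
Variables (K : numFieldType) (V W : normedModType K).

Lemma is_diff_linear (f : V -> W) x : linear f -> continuous f -> is_diff x f f.
Proof.
move=> flin fcont.
pose fL : {linear V -> W} := HB.pack f (GRing.isLinear.Build _ _ _ _ f flin).
by apply: DiffDef;
  [exact: (@linear_differentiable _ _ _ fL) | exact: (@diff_lin _ _ _ fL)].
Qed.

Lemma is_diff_scale (k dk : V -> K^o) (f df : V -> W) x :
  is_diff x k dk -> is_diff x f df ->
  is_diff x (fun y => k y *: f y) (fun v => k x *: df v + dk v *: f x).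
Proof.
move=> [dk_ex dkE] [df_ex dfE].
have scale_bilinear : bilinear_for (GRing.Scale.Law.clone _ _ *:%R _)
    (GRing.Scale.Law.clone _ _ *:%R _) (@GRing.scale K^o W).
  by split=> [u|u] a y z /=; rewrite ?scalerDl ?scalerDr !scalerA // mulrC.
pose sB : {bilinear K^o -> W -> W} :=
  HB.pack (@GRing.scale K^o W) (bilinear_isBilinear.Build _ _ _ _ _ _ _ scale_bilinear).
have scont : continuous (fun q : K^o * W => sB q.1 q.2) := scale_continuous.
have dkf := differentiable_pair dk_ex df_ex.
have dsB := differentiable_bilin (k x, f x) scont.
have -> : (fun y => k y *: f y) = (fun q => sB q.1 q.2) \o (fun y => (k y, f y)) by [].
apply: DiffDef; first exact: differentiable_comp.
by rewrite diff_comp // diff_bilin // diff_pair // dkE dfE.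
Qed.

End Differentials.

Section Householder.
Variables (R : realType) (n : nat).
Implicit Types (w x y z : CV R n).

(* For [w = 0] this is the identity, as [2 / 0 = 0]. *)
Definition householder w z : CV R n := z - ((2 / sqnorm w)%:C * herm z w) *: w.

Lemma householder_coef w :
  (2 / sqnorm w)%:C * (2 / sqnorm w)%:C * (sqnorm w)%:C
  = 2 * (2 / sqnorm w)%:C :> R[i].
Proof.
rewrite -[2 : R[i]](rmorph_nat (@real_complex R)) -!rmorphM; congr (_%:C).
by have [->|w0] := eqVneq (sqnorm w) 0; [rewrite invr0 !mulr0 | field].
Qed.

Lemma herm_householder w x y : herm (householder w x) (householder w y) = herm x y.
Proof.
rewrite /householder hermBl !hermBr !hermZl !hermZr hermxx rmorphM /= conjC_realc.
rewrite -(hermC y w); have := householder_coef w.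
set c := (2 / sqnorm w)%:C; set s := (sqnorm w)%:C => hc.
transitivity (herm x y + herm x w * herm w y * (c * c * s - 2 * c)); first ring.
by rewrite hc subrr mulr0 addr0.
Qed.

Lemma sqnorm_householder w x : sqnorm (householder w x) = sqnorm x.
Proof. by apply: complexI; rewrite -!hermxx herm_householder. Qed.

Lemma householderK w : involutive (householder w).
Proof.
move=> x; rewrite {1}/householder {2}/householder hermBl hermZl hermxx.
have := householder_coef w.
set c := (2 / sqnorm w)%:C; set s := (sqnorm w)%:C => hc.
rewrite -addrA -opprD -scalerDl.
have -> : c * herm x w + c * (herm x w - c * herm x w * s) = 0.
  transitivity (herm x w * (2 * c - c * c * s)); first ring.
  by rewrite hc subrr mulr0.
by rewrite scale0r subr0.
Qed.

Lemma householder0 w : householder w 0 = 0.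
Proof. by rewrite /householder herm0l mulr0 scale0r subr0. Qed.

Lemma householder_linear w : linear (householder w).
Proof.
move=> k x y; rewrite /householder hermDl hermZl scalerBr scalerA.
by rewrite mulrDr scalerDl mulrCA -scalerA opprD addrACA.
Qed.

Lemma householder_continuous w : continuous (householder w).
Proof.
move=> x; pose c z : R[i] := (2 / sqnorm w)%:C * herm z w.
apply: (@continuousB R[i] (CV R n) (CV R n) id (fun z => c z *: w)).
  exact: cvg_id.
apply: (@continuousZr_tmp R[i] (CV R n) (CV R n) c w).
apply: (@continuousM R[i] (CV R n) (fun=> (2 / sqnorm w)%:C) (fun z => herm z w)).
  exact: cst_continuous.
exact: continuous_herml.
Qed.

Lemma is_diff_householder w x : is_diff x (householder w) (householder w).
Proof. exact: is_diff_linear (householder_linear w) (@householder_continuous w). Qed.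

Lemma householder_aut w : is_aut_ball (householder w).
Proof.
have ball_householder z : unit_ball z -> unit_ball (householder w z).
  by rewrite /unit_ball /= sqnorm_householder.
have holo : holomorphic_on (unit_ball (n:=n)) (householder w).
  by move=> z _; case: (is_diff_householder w z).
split=> //; split=> //; exists (householder w).
by do 3!split=> //; move=> z _; rewrite householderK.
Qed.

Lemma householder_swap x y : sqnorm x = sqnorm y -> herm y x = herm x y ->
  householder (x - y) x = y.
Proof.
move=> xy_norm xy_herm; set w := x - y.
have [/eqP|w0] := eqVneq (sqnorm w) 0.
  rewrite sqnorm_eq0 subr_eq0 => /eqP xy.
  by rewrite /w xy subrr /householder scaler0 subr0.
have hw : (sqnorm w)%:C = herm x w * 2.
  by rewrite -hermxx /w !(hermBl, hermBr) xy_herm !hermxx xy_norm; ring.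
have hxw : herm x w = (sqnorm w / 2)%:C.
  by rewrite rmorphM /= fmorphV /= rmorph_nat hw mulfK // pnatr_eq0.
rewrite /householder hxw -rmorphM (_ : 2 / sqnorm w * (sqnorm w / 2) = 1); last by field.
by rewrite rmorph1 scale1r /w opprB addrC subrK.
Qed.

End Householder.

Section HouseholderFirstAxis.
Variables (R : realType) (n : nat).
Local Notation e1 := (ev R (ord0 : 'I_n.+1)).

Lemma householder_to_e1 (x : CV R n.+1) :
  exists w (b : R[i]), householder w x = b *: e1 /\ cabs2 b = sqnorm x.
Proof.
have [b [bx bE]] := exists_aligned_scalar (x 0 0) (sqnorm_ge0 x).
exists (x - b *: e1), b; split => //.
apply: householder_swap; first by rewrite sqnormZe1.
by rewrite hermZl herm_e1l hermZr herm_e1r.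
Qed.

End HouseholderFirstAxis.

Section Mobius.
Variables (R : realType) (n : nat).
Local Notation e1 := (ev R (ord0 : 'I_n.+1)).
Implicit Types (a : R[i]) (z : CV R n.+1).

(* [mobius a z = ((z_1 - a) e1 + s (z - z_1 e1)) / (1 - conj a z_1)] with
   [s = sqrt (1 - |a|^2)]: minus the involutive automorphism of B_n exchanging
   [a e1] and [0]. *)
Definition mobius_scale a : R[i] := (Num.sqrt (1 - cabs2 a))%:C.
Definition mobius_den a z : R[i] := 1 - a^* * z 0 0.
Definition mobius_lin a z : CV R n.+1 :=
  mobius_scale a *: z + ((1 - mobius_scale a) * z 0 0) *: e1.
Definition mobius_num a z : CV R n.+1 := mobius_lin a z - a *: e1.
Definition mobius a z : CV R n.+1 := (mobius_den a z)^-1 *: mobius_num a z.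

Lemma mobius_scaleJ a : (mobius_scale a)^* = mobius_scale a.
Proof. exact: conjC_realc. Qed.

Lemma mobius_scaleN a : mobius_scale (- a) = mobius_scale a.
Proof. by rewrite /mobius_scale cabs2N. Qed.

Lemma mobius_scale_sq a :
  cabs2 a <= 1 -> mobius_scale a * mobius_scale a = 1 - a * a^*.
Proof.
by move=> a1; rewrite -realcM -expr2 sqr_sqrtr ?subr_ge0 // realcB realc1 cabs2E.
Qed.

Lemma one_sub_cabs2_neq0 a : cabs2 a < 1 -> 1 - a * a^* != 0.
Proof.
move=> a1; rewrite cabs2E -realc1 -realcB lt0r_neq0 //.
by rewrite ltcR subr_gt0.
Qed.

Lemma mobius_den_neq0 a z : cabs2 a < 1 -> unit_ball z -> mobius_den a z != 0.
Proof.
rewrite /unit_ball /mobius_den /= subr_eq0 => a1 zB; apply/eqP => az.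
have : cabs2 (a^* * z 0 0) = 1 by rewrite -az /cabs2 /= expr1n expr0n addr0.
have := cabs2_coord0_le_sqnorm z; have := cabs2_ge0 a; have := cabs2_ge0 (z 0 0).
rewrite cabs2M cabs2J; nra.
Qed.

Lemma mobius_coord0 a z : (mobius a z) 0 0 = (z 0 0 - a) / mobius_den a z.
Proof. by rewrite !mxE !eqxx /= !mulr1 mulrC; congr (_ * _); ring. Qed.

Lemma mobius_num_center a : mobius_num a (a *: e1) = 0.
Proof.
rewrite /mobius_num /mobius_lin coord0Ze1 scalerA -!scalerDl -scalerBl.
by rewrite [mobius_scale a + _]addrC subrK scale1r subrr scale0r.
Qed.

Lemma mobius_center a : mobius a (a *: e1) = 0.
Proof. by rewrite /mobius mobius_num_center scaler0. Qed.

Lemma herm_mobius_num a z : cabs2 a <= 1 ->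
  herm (mobius_num a z) (mobius_num a z) =
  mobius_den a z * (mobius_den a z)^* - (1 - a * a^*) * (1 - (sqnorm z)%:C).
Proof.
move=> a1; have ss := mobius_scale_sq a1.
rewrite /mobius_num /mobius_lin /mobius_den.
rewrite !(hermDl, hermDr, hermNl, hermNr, hermZl, hermZr).
rewrite hermxx herm_e1r herm_e1l herm_e1e1.
rewrite !(conjCB, conjCM) conjC1 conjCK mobius_scaleJ.
set s := mobius_scale a in ss *; set z1 := z 0 0.
transitivity ((1 - a^* * z1) * (1 - a * z1^*) - (1 - a * a^*) * (1 - (sqnorm z)%:C)
  + ((sqnorm z)%:C - z1 * z1^*) * (s * s - (1 - a * a^*))); first ring.
by rewrite ss subrr mulr0 addr0.
Qed.

Lemma one_sub_sqnorm_mobius a z : cabs2 a <= 1 -> mobius_den a z != 0 ->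
  (1 - sqnorm (mobius a z)) * cabs2 (mobius_den a z) = (1 - cabs2 a) * (1 - sqnorm z).
Proof.
move=> a1 D0; apply: complexI; rewrite !realcM !realcB realc1 -!cabs2E -hermxx.
rewrite /mobius hermZl hermZr herm_mobius_num // fmorphV /=.
by field; rewrite fmorph_eq0 D0.
Qed.

Lemma mobius_ball a z : cabs2 a < 1 -> unit_ball z -> unit_ball (mobius a z).
Proof.
move=> a1 zB; have D0 := mobius_den_neq0 a1 zB.
have := one_sub_sqnorm_mobius (ltW a1) D0.
rewrite /unit_ball /= in zB *; rewrite -subr_gt0 => identity.
have : 0 < (1 - cabs2 a) * (1 - sqnorm z) by rewrite mulr_gt0 // subr_gt0.
by rewrite -identity pmulr_lgt0 // cabs2_gt0.
Qed.

Lemma mobiusK a z : cabs2 a < 1 -> unit_ball z -> mobius (- a) (mobius a z) = z.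
Proof.
move=> a1 zB; have D0 := mobius_den_neq0 a1 zB.
have A0 := one_sub_cabs2_neq0 a1; have ss := mobius_scale_sq (ltW a1).
have E : mobius_den (- a) (mobius a z) = (1 - a * a^*) / mobius_den a z.
  rewrite {1}/mobius_den mobius_coord0 conjCN.
  by move: D0; rewrite /mobius_den => D0; field.
rewrite {1}/mobius E; apply/rowP => j.
rewrite /mobius_num /mobius_lin mobius_scaleN mobius_coord0.
rewrite /mobius /mobius_num /mobius_lin !mxE.
set s := mobius_scale a in ss *; set z1 := z 0 0.
have [->|_] := eqVneq j 0; rewrite /= ?mulr1 ?mulr0 ?addr0 ?subr0.
  by move: D0; rewrite /mobius_den -/z1 => D0; field; apply/andP; split.
transitivity ((s * s) / (1 - a * a^*) * z 0 j).
  by field; apply/andP; split.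
by rewrite ss divff // mul1r.
Qed.

Lemma mobius_lin_linear a : linear (mobius_lin a).
Proof.
move=> k x y; rewrite /mobius_lin !mxE scalerDr !scalerA mulrDr scalerDl.
by rewrite scalerDr !scalerA [mobius_scale a * k]mulrC [_ * (k * _)]mulrCA addrACA.
Qed.

Lemma mobius_lin_continuous a : continuous (mobius_lin a).
Proof.
move=> x; pose c z : R[i] := (1 - mobius_scale a) * z 0 0.
apply: (@continuousD R[i] (CV R n.+1) (CV R n.+1)
  ( *:%R (mobius_scale a)) (fun z => c z *: e1)).
  exact: scaler_continuous.
apply: (@continuousZr_tmp R[i] (CV R n.+1) (CV R n.+1) c e1).
apply: (@continuousM R[i] (CV R n.+1) (fun=> 1 - mobius_scale a)
  (fun z : CV R n.+1 => z 0 0)).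
  exact: cst_continuous.
exact: coord_continuous.
Qed.

Lemma is_diff_mobius_num a z : is_diff z (mobius_num a) (mobius_lin a).
Proof.
have iL := is_diff_linear z (mobius_lin_linear a) (@mobius_lin_continuous a).
have -> : mobius_num a = mobius_lin a - cst (a *: e1) by [].
exact: is_diff_eq (subr0 (mobius_lin a)).
Qed.

Lemma differentiable_mobius_den a z :
  differentiable (fun y => mobius_den a y : R[i]^o) z.
Proof.
have coord : differentiable (fun y : CV R n.+1 => y 0 0 : R[i]^o) z.
  exact: differentiable_coord.
have prod : differentiable (fun y : CV R n.+1 => a^* * y 0 0 : R[i]^o) z.
  apply: (@differentiableM R[i] (CV R n.+1) (cst a^*) (fun y : CV R n.+1 => y 0 0)).
    exact: differentiable_cst.
  exact: coord.
rewrite /mobius_den.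
exact: (@differentiableB R[i] (CV R n.+1) R[i]^o (cst 1) (fun y => a^* * y 0 0)).
Qed.

Lemma is_diff_mobius a z : mobius_den a z != 0 ->
  is_diff z (mobius a) (fun v => (mobius_den a z)^-1 *: mobius_lin a v
    + 'd (fun y => (mobius_den a y)^-1 : R[i]^o) z v *: mobius_num a z).
Proof.
move=> D0; apply: is_diff_scale (is_diff_mobius_num a z).
exact/differentiableP/(differentiableV (differentiable_mobius_den a z) D0).
Qed.

Lemma is_diff_mobius_center a : cabs2 a < 1 ->
  is_diff (a *: e1) (mobius a) (fun v => ((1 - cabs2 a)^-1)%:C *: mobius_lin a v).
Proof.
move=> a1; have D0 : mobius_den a (a *: e1) != 0.
  by apply: mobius_den_neq0 => //; rewrite /unit_ball /= sqnormZe1.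
apply: is_diff_eq (is_diff_mobius D0) _; apply/funext => v.
rewrite mobius_num_center scaler0 addr0 /mobius_den coord0Ze1.
by rewrite mulrC cabs2E -realc1 -realcB realcV.
Qed.

Lemma mobius_aut a : cabs2 a < 1 -> is_aut_ball (mobius a).
Proof.
move=> a1; have aN1 : cabs2 (- a) < 1 by rewrite cabs2N.
have holo b : cabs2 b < 1 -> holomorphic_on (unit_ball (n:=n.+1)) (mobius b).
  by move=> b1 z zB; case: (is_diff_mobius (mobius_den_neq0 b1 zB)).
split; first exact: holo.
split; first by move=> z; apply: mobius_ball.
exists (mobius (- a)); split; first exact: holo.
split; first by move=> z; apply: mobius_ball.
split=> z zB; first exact: mobiusK.
by rewrite -{1}(opprK a) mobiusK.
Qed.

Lemma sqnorm_mobius_lin a u : cabs2 a <= 1 ->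
  sqnorm (mobius_lin a u) = (1 - cabs2 a) * sqnorm u + cabs2 a * cabs2 (u 0 0).
Proof.
move=> a1; have ss := mobius_scale_sq a1.
apply: complexI; rewrite -hermxx /mobius_lin !(hermDl, hermDr, hermZl, hermZr).
rewrite hermxx herm_e1r herm_e1l herm_e1e1 !conjCM conjCB conjC1 mobius_scaleJ.
rewrite rmorphD /= !realcM realcB realc1 -!cabs2E.
set s := mobius_scale a in ss *.
transitivity (s * s * ((sqnorm u)%:C - u 0 0 * (u 0 0)^*) + u 0 0 * (u 0 0)^*).
  by ring.
by rewrite ss; ring.
Qed.

End Mobius.

Section InvariantMetric.
Variables (R : realType) (n : nat) (F : CV R n.+1 -> CV R n.+1 -> R).
Hypothesis F_invariant : aut_invariant F.
Hypothesis F_homogeneous : forall z v (l : R[i]),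
  unit_ball z -> F z (l *: v) ^+ 2 = cabs2 l * F z v ^+ 2.
Local Notation e1 := (ev R (ord0 : 'I_n.+1)).

Lemma invariant_householder w z v : unit_ball z ->
  F (householder w z) (householder w v) = F z v.
Proof.
move=> zB; case: (is_diff_householder w z) => _ dH.
by rewrite -(F_invariant (householder_aut w) v zB) dH.
Qed.

Lemma invariant_mobius_center a v : cabs2 a < 1 ->
  F 0 (((1 - cabs2 a)^-1)%:C *: mobius_lin a v) = F (a *: e1) v.
Proof.
move=> a1; have aB : unit_ball (a *: e1) by rewrite /unit_ball /= sqnormZe1.
case: (is_diff_mobius_center n a1) => _ dM.
by rewrite -(F_invariant (mobius_aut n a1) v aB) dM mobius_center.
Qed.

Lemma invariant_at_origin v : F 0 v ^+ 2 = F 0 e1 ^+ 2 * sqnorm v.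
Proof.
have [w [b [wv bv]]] := householder_to_e1 v.
rewrite -(@invariant_householder w 0 v (unit_ball0 _ _)) householder0 wv.
rewrite F_homogeneous; last exact: unit_ball0.
by rewrite bv mulrC.
Qed.

Lemma invariant_formula z v : unit_ball z ->
  F z v ^+ 2 = F 0 e1 ^+ 2 *
    (((1 - sqnorm z) * sqnorm v + cabs2 (herm z v)) / (1 - sqnorm z) ^+ 2).
Proof.
move=> zB; have [w [b [wz bz]]] := householder_to_e1 z.
have b1 : cabs2 b < 1 by rewrite bz.
set u := householder w v.
have hzv : cabs2 (herm z v) = cabs2 b * cabs2 (u 0 0).
  by rewrite -(herm_householder w z v) wz hermZl herm_e1l cabs2M cabs2J.
rewrite -(@invariant_householder w z v zB) wz -/u -(invariant_mobius_center u b1).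
rewrite invariant_at_origin sqnormZ cabs2_real sqnorm_mobius_lin ?ltW //.
by rewrite hzv -bz -(sqnorm_householder w v) -/u exprVn [_^-1 * _]mulrC.
Qed.

End InvariantMetric.

Theorem theorem1p2 (R : realType) (n : nat) (F : CV R n -> CV R n -> R) :
  strongly_pseudoconvex_finsler F -> aut_invariant F ->
  exists c : R, 0 < c /\
    forall z v : CV R n, unit_ball z ->
      F z v ^+ 2 = c * (((1 - sqnorm z) * sqnorm v + cabs2 (herm z v))
                        / (1 - sqnorm z) ^+ 2).
Proof.
case: n F => [|n] F [F_ge0 [_ [F_eq0 [_ [F_homogeneous _]]]]] F_invariant.
  exists 1; split => // z v zB; have -> : v = 0 by apply/rowP => -[].
  rewrite (proj2 (F_eq0 z 0 zB)) // sqnorm0 herm0r cabs2_real.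
  by rewrite !expr2 !mulr0 add0r mul0r mulr0.
have e1_pos : 0 < F 0 (ev R ord0).
  rewrite lt_def F_ge0 ?andbT; last exact: unit_ball0.
  by apply: contraNneq (e1_neq0 R n) => /(F_eq0 _ _ (unit_ball0 _ _))/eqP.
exists (F 0 (ev R ord0) ^+ 2); split; first exact: exprn_gt0.
by move=> z v; apply: invariant_formula.
Qed.
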